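(* Let $\mathcal G$ be a $\Gamma$-periodic graph with fundamental graph $\mathcal G_*=(\mathcal V_*,\mathcal A_* )=\mathcal G/\Gamma$, where $\Gamma$ has rank $d$, and let $\beta$ be the Betti number of $\mathcal G_*$. Then: (i) there exists a basis $\{\mathbf c_1,\dots,\mathbf c_\beta\}$ of the cycle space $\mathcal C$ of $\mathcal G_*$ such that $\tau(\mathbf c_1),\dots,\tau(\mathbf c_d)$ form the standard orthonormal basis of $\mathbb Z^d$, and $\{\mathbf c_{d+1},\dots,\mathbf c_\beta\}$ is a basis of the subspace $\mathcal C^0$ of all cycles of $\mathcal G_*$ with zero index; (ii) $\{\mathbf c_1,\dots,\mathbf c_\beta\}\cup\{\mathbf e_x\}_{x\in\mathcal V_*}$ is a basis of the cycle space $\widetilde{\mathcal C}$ of the modified fundamental graph $\widetilde{\mathcal G}_*=(\mathcal V_*,\mathcal A_*\cup\{\mathbf e_x\}_{x\in\mathcal V_*})$, where $\mathbf e_x$ is a loop at the vertex $x$.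
   Context: Let $\Gamma\subset\mathbb R^d$ be a lattice with basis $\mathfrak a_1,\dots,\mathfrak a_d$ and fundamental cell $\Omega=\{\sum_sx_s\mathfrak a_s:(x_s)\in[0,1)^d\}$. A $\Gamma$-periodic graph $\mathcal G=(\mathcal V,\mathcal E)$ is a connected, locally finite, infinite graph embedded in $\mathbb R^d$ (loops and multiple edges allowed), invariant under translations by $\Gamma$, whose quotient $\mathcal G_*=(\mathcal V_*,\mathcal E_* )$ is finite; $\beta=\#\mathcal E_*-\#\mathcal V_*+1$. Oriented edges: $\mathcal A_*$. Edge index: write $x=x_0+[x]$ with $x_0\in\mathcal V\cap\Omega$, $[x]\in\Gamma$ with coordinates $[x]_{\mathbb A}\in\mathbb Z^d$; for $(x,y)\in\mathcal A$, $\tau((x,y))=[y]_{\mathbb A}-[x]_{\mathbb A}$, which is $\Gamma$-invariant and thus defined on $\mathcal A_*$, with $\tau$ of the reversed edge equal to $-\tau$. The cycle space $\mathcal C$ of a graph is its integer cycle space (first homology group with $\mathbb Z$ coefficients, a free abelian group of rank equal to the Betti number), generated by closed cycles (sequences of oriented edges forming a closed walk); the index $\tau(\mathbf c)=\sum_{\mathbf e\in\mathbf c}\tau(\mathbf e)$ extends additively to a homomorphism $\mathcal C\to\mathbb Z^d$. In $\widetilde{\mathcal G}_*$ the added loops satisfy $\tau(\mathbf e_x)=0$. *)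

From HB Require Import structures.
From mathcomp Require Import all_boot all_order all_algebra.
From Stdlib Require Import Relations.
Set Implicit Arguments. Unset Strict Implicit. Unset Printing Implicit Defensive.
Import Order.TTheory GRing.Theory Num.Theory.
Local Open Scope ring_scope.

(* A finite multigraph (loops and multiple edges allowed): vertex type V,
   edge type E, each edge carrying a fixed reference orientation
   src e -> tgt e.  The reversed orientation is encoded by a sign. *)

Definition chain (E : finType) := {ffun E -> int}.

(* Boundary of a chain at a vertex v (a loop contributes 0). *)
Definition boundary (V E : finType) (src tgt : E -> V) (c : chain E) (v : V)
  : int :=
  \sum_(e | tgt e == v) c e - \sum_(e | src e == v) c e.

Definition is_cycle (V E : finType) (src tgt : E -> V) (c : chain E) : Prop :=
  forall v, boundary src tgt c v = 0.

Definition chain_index (E : finType) (d : nat) (tau : E -> 'rV[int]_d)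
  (c : chain E) : 'rV[int]_d :=
  \sum_(e : E) c e *: tau e.

Definition is_cycle0 (V E : finType) (src tgt : E -> V) (d : nat)
  (tau : E -> 'rV[int]_d) (c : chain E) : Prop :=
  is_cycle src tgt c /\ chain_index tau c = 0.

Definition is_Zbasis_on (E I : finType) (J : pred I) (P : chain E -> Prop)
  (b : I -> chain E) : Prop :=
  (forall i, J i -> P (b i)) /\
  forall f, P f ->
    exists! a : {ffun I -> int},
      (forall i, ~~ J i -> a i = 0) /\
      f = [ffun e => \sum_(i | J i) a i * b i e].

(* The Gamma-periodic graph with quotient (V,E,src,tgt) and edge index tau,
   realized through the coordinates x = x0 + [x]: vertices are pairs
   (x0, [x]_A) in V * Z^d, and each quotient edge e gives the edges
   (src e, n) -- (tgt e, n + tau e) for all n in Z^d. *)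
Definition periodic_adj (V E : finType) (src tgt : E -> V) (d : nat)
  (tau : E -> 'rV[int]_d) (x y : V * 'rV[int]_d) : Prop :=
  exists e n, x = (src e, n) /\ y = (tgt e, n + tau e).

Definition periodic_connected (V E : finType) (src tgt : E -> V) (d : nat)
  (tau : E -> 'rV[int]_d) : Prop :=
  forall x y, clos_refl_sym_trans _ (periodic_adj src tgt tau) x y.

(* Modified fundamental graph: one extra loop e_x at every vertex x. *)
Definition msrc (V E : finType) (src : E -> V) (a : E + V) : V :=
  match a with inl e => src e | inr x => x end.

Definition mtau (V E : finType) (d : nat) (tau : E -> 'rV[int]_d) (a : E + V)
  : 'rV[int]_d :=
  match a with inl e => tau e | inr _ => 0 end.

Definition ext_chain (V E : finType) (c : chain E) : chain (E + V)%type :=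
  [ffun a => match a with inl e => c e | inr _ => 0 end].

Definition loop_chain (V E : finType) (x : V) : chain (E + V)%type :=
  [ffun a => match a with inl _ => 0 | inr y => (y == x)%:Z end].

Definition betti (V E : finType) : nat := (#|E| + 1 - #|V|)%N.

(* Let M : Z^E -> Z^V + Z^d send a chain c to (boundary c, tau c), so that
   ker M is the group C^0 of cycles of zero index.  Connectivity of the
   periodic graph gives, for every coordinate vector e_j, a cycle of index e_j
   (the projection of a walk from x to x + a_j), and it forces every integer
   vector annihilated by the transpose of M to vanish on the index coordinates
   and to be constant along edges, i.e. to be a multiple of the indicator of V.
   By the Smith normal form ker M and ker M^T are free of ranks #E - r and
   #V + d - r for one and the same r, hence r = #V + d - 1 and C^0 is free of
   rank beta - d.  As tau maps C onto Z^d with those cycles as a section, they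
   extend any basis of C^0 to a basis of C.  In the modified graph every loop
   e_x is a cycle invisible to boundaries, so a cycle splits uniquely into its
   restriction to E_* and a combination of loops. *)

From HB Require Import structures.
From mathcomp Require Import all_boot all_order all_algebra zify.
From Stdlib Require Import Relations.
Set Implicit Arguments. Unset Strict Implicit. Unset Printing Implicit Defensive.
Import Order.TTheory GRing.Theory Num.Theory.
Local Open Scope ring_scope.

(** * Z-bases of groups of chains *)

Definition lincomb (I E : finType) (a : {ffun I -> int}) (b : I -> chain E) :
  chain E := [ffun e => \sum_i a i * b i e].

Lemma lincombB (I E : finType) (a a' : {ffun I -> int}) (b : I -> chain E) :
  lincomb (a - a') b = lincomb a b - lincomb a' b.
Proof.
apply/ffunP => e; rewrite !ffunE -sumrB; apply: eq_bigr => i _.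
by rewrite !ffunE mulrBl.
Qed.

Lemma lincomb0 (I E : finType) (b : I -> chain E) : lincomb 0 b = 0.
Proof.
by apply/ffunP => e; rewrite !ffunE big1 // => i _; rewrite ffunE mul0r.
Qed.

Definition ord_cat (T : Type) m n (f : 'I_m -> T) (g : 'I_n -> T) (i : 'I_(m + n)) :
  T := match split i with inl j => f j | inr k => g k end.

Lemma ord_cat_lshift (T : Type) m n (f : 'I_m -> T) (g : 'I_n -> T) j :
  ord_cat f g (lshift n j) = f j.
Proof. by rewrite /ord_cat -[lshift n j]/(unsplit (inl j)) unsplitK. Qed.

Lemma ord_cat_rshift (T : Type) m n (f : 'I_m -> T) (g : 'I_n -> T) k :
  ord_cat f g (rshift m k) = g k.
Proof. by rewrite /ord_cat -[rshift m k]/(unsplit (inr k)) unsplitK. Qed.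

Lemma lincomb_ord_cat (E : finType) m n (a : {ffun 'I_(m + n) -> int})
    (b : 'I_m -> chain E) (b' : 'I_n -> chain E) :
  lincomb a (ord_cat b b') =
  lincomb [ffun j => a (lshift n j)] b + lincomb [ffun k => a (rshift m k)] b'.
Proof.
apply/ffunP => e; rewrite !ffunE big_split_ord /=.
by congr (_ + _); apply: eq_bigr => i _; rewrite ffunE ?ord_cat_lshift ?ord_cat_rshift.
Qed.

Section ZBasis.
Variables (I E : finType) (P : chain E -> Prop) (b : I -> chain E).

Lemma zbasis_intro :
  (forall i, P (b i)) ->
  (forall f, P f -> exists a : {ffun I -> int}, f = lincomb a b) ->
  (forall a : {ffun I -> int}, lincomb a b = 0 -> a = 0) ->
  is_Zbasis_on predT P b.
Proof.
move=> Pb span free; split=> [i _ | f /span [a fa]]; first exact: Pb.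
exists a; split=> // a' [_ fa']; apply/eqP; rewrite -subr_eq0; apply/eqP.
by apply: free; rewrite lincombB -fa -[X in _ - X]fa' subrr.
Qed.

Lemma zbasis_span : is_Zbasis_on predT P b ->
  forall f, P f -> exists a : {ffun I -> int}, f = lincomb a b.
Proof. by move=> [_ hb] f /hb [a [[_ fa] _]]; exists a. Qed.

Lemma zbasis_free : is_Zbasis_on predT P b -> P 0 ->
  forall a : {ffun I -> int}, lincomb a b = 0 -> a = 0.
Proof.
move=> [_ hb] /hb [a0 [_ a0_uniq]] a ab0.
by rewrite -(a0_uniq a) //; apply: a0_uniq; split=> //; rewrite -[LHS](lincomb0 b).
Qed.

Lemma zbasis_ext (Q : chain E -> Prop) :
  (forall f, P f <-> Q f) -> is_Zbasis_on predT P b -> is_Zbasis_on predT Q b.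
Proof.
by move=> PQ [Pb hb]; split=> [i _ | f /PQ /hb //]; apply/PQ/Pb.
Qed.

Lemma zbasis_sub (J : pred I) (P0 : chain E -> Prop) :
  is_Zbasis_on predT P b -> (forall f, P0 f -> P f) ->
  (forall i, J i -> P0 (b i)) ->
  (forall a : {ffun I -> int}, P0 (lincomb a b) -> forall i, ~~ J i -> a i = 0) ->
  is_Zbasis_on J P0 b.
Proof.
move=> [_ hb] P0P P0b coefJ; split=> // f P0f.
have lincombJ (a : {ffun I -> int}) : (forall i, ~~ J i -> a i = 0) ->
    [ffun e => \sum_(i | J i) a i * b i e] = lincomb a b.
  move=> aJ; apply/ffunP => e; rewrite !ffunE [RHS](bigID J) /=.
  by rewrite [X in _ + X]big1 ?addr0 // => i /aJ ->; rewrite mul0r.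
have [a [[_ fa] a_uniq]] := hb f (P0P f P0f).
have aJ : forall i, ~~ J i -> a i = 0.
  by apply: coefJ; rewrite (_ : lincomb a b = f).
exists a; split=> [|a' [a'J fa']]; first by rewrite lincombJ.
by apply: a_uniq; split=> //; rewrite fa' lincombJ.
Qed.

End ZBasis.

Lemma sum_delta_l (R : pzSemiRingType) (I : finType) (i0 : I) (F : I -> R) :
  \sum_i (i == i0)%:R * F i = F i0.
Proof.
rewrite (bigD1 i0) //= eqxx mul1r big1 ?addr0 // => i /negPf ->.
by rewrite mul0r.
Qed.

Lemma zbasis_line_card (J : finType) p (u : chain J) (b : 'I_p -> chain J) :
  u != 0 ->
  is_Zbasis_on predT (fun y : chain J => exists c : int, forall j, y j = c * u j) b ->
  p = 1%N.
Proof.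
move=> u_neq0 hb.
have /(zbasis_free hb) free : exists c : int, forall j, (0 : chain J) j = c * u j.
  by exists 0 => j; rewrite ffunE mul0r.
case: p b hb free => [|[|p]] b hb free //.
  have [|a ua] := zbasis_span hb (f := u); first by exists 1 => j; rewrite mul1r.
  have u0 : u = 0 by rewrite ua; apply/ffunP => e; rewrite !ffunE big_ord0.
  by rewrite u0 eqxx in u_neq0.
have [[c0 b0u] [c1 b1u]] := (hb.1 ord0 isT, hb.1 ord_max isT).
pose a : {ffun 'I_p.+2 -> int} :=
  [ffun t => (t == ord0)%:R * c1 - (t == ord_max)%:R * c0].
have /ffunP a0 : a = 0.
  apply: free; apply/ffunP => e; rewrite !ffunE.
  under eq_bigr do rewrite ffunE mulrBl -!mulrA.
  by rewrite sumrB !sum_delta_l b0u b1u mulrCA subrr.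
have c0_eq0 : c0 = 0.
  have := a0 ord_max; rewrite !ffunE eqxx -val_eqE /= mul0r sub0r mul1r.
  by move/eqP; rewrite oppr_eq0 => /eqP.
have /ffunP/(_ ord0) : [ffun t => (t == ord0)%:R] = 0 :> {ffun 'I_p.+2 -> int}.
  apply: free; apply/ffunP => e; rewrite !ffunE.
  under eq_bigr do rewrite ffunE.
  by rewrite sum_delta_l b0u c0_eq0 mul0r.
by rewrite !ffunE eqxx.
Qed.

(** * Kernels of integer matrices *)

Definition row_zbasis m p (P : 'rV[int]_m -> Prop) (b : 'I_p -> 'rV[int]_m) :=
  (forall t, P (b t)) /\
  forall x, P x -> exists! a : {ffun 'I_p -> int}, x = \sum_t a t *: b t.

Definition diag_mx_seq m n (s : seq int) : 'M[int]_(m, n) :=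
  \matrix_(i, j) (s`_i *+ (i == j :> nat)).

Lemma diag_mx_seq_tr m n s : (diag_mx_seq m n s)^T = diag_mx_seq n m s.
Proof.
apply/matrixP => i j; rewrite !mxE eq_sym.
by case: eqP => [->|]; rewrite ?mulr0n.
Qed.

Lemma mul_diag_mx_seq_eq0 m n (s : seq int) (z : 'rV[int]_m) :
  (z *m diag_mx_seq m n s = 0) <->
  (forall j : 'I_m, (j < n)%N -> s`_j != 0 -> z 0 j = 0).
Proof.
split=> [zD j jn sj | z0].
  have := congr1 (fun M : 'rV[int]_n => M 0 (Ordinal jn)) zD.
  rewrite !mxE (bigD1 j) //= big1 ?addr0 => [|i ij]; last first.
    by rewrite !mxE; case: eqP => [ij'|]; [case/eqP: ij; apply: val_inj | rewrite mulr0].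
  by rewrite !mxE eqxx mulr1n => /eqP; rewrite mulf_eq0 (negPf sj) orbF => /eqP.
apply/matrixP => i k; rewrite !mxE big1 // => j _; rewrite !mxE.
have [jk|] := eqVneq (j : nat) k; last by rewrite mulr0.
have [->|sj] := eqVneq s`_j 0; first by rewrite mul0rn mulr0.
by rewrite ord1 z0 ?mul0r // jk.
Qed.

Lemma coord_sum_delta_mx m p (u : 'I_p -> 'I_m) (a : 'I_p -> int) t0 :
  injective u -> (\sum_t a t *: delta_mx 0 (u t) : 'rV[int]_m) 0 (u t0) = a t0.
Proof.
move=> u_inj; rewrite summxE (bigD1 t0) //= big1 ?addr0.
  by rewrite !mxE !eqxx mulr1.
move=> t /negPf tt0; rewrite !mxE eqxx /=.
by case: eqP => [/u_inj e|]; [rewrite e eqxx in tt0 | rewrite mulr0].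
Qed.

(* In the basis of rows of [L^-1], the kernel of [L D R] is cut out by the
   coordinates of the nonzero diagonal entries of [D]. *)
Lemma equiv_diag_kernel_basis m n (s : seq int) (L : 'M[int]_m) (R : 'M[int]_n) p :
  L \in unitmx -> R \in unitmx ->
  p = #|~: [set j : 'I_m | (j < n)%N && (s`_j != 0)]| ->
  exists b : 'I_p -> 'rV[int]_m,
    row_zbasis (fun x => x *m (L *m diag_mx_seq m n s *m R) = 0) b.
Proof.
set S := [set j : 'I_m | _] => uL uR ->.
have kerP (x : 'rV[int]_m) : x *m (L *m diag_mx_seq m n s *m R) = 0 <->
    (forall j, j \in S -> (x *m L) 0 j = 0).
  rewrite !mulmxA; split=> [xM j | x0].
    rewrite inE => /andP [jn sj].
    have xLD : x *m L *m diag_mx_seq m n s = 0.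
      by rewrite -[LHS](mulmxK uR) xM mul0mx.
    by move/mul_diag_mx_seq_eq0: xLD; apply.
  suff -> : x *m L *m diag_mx_seq m n s = 0 by rewrite mul0mx.
  by apply/mul_diag_mx_seq_eq0 => j jn sj; apply: x0; rewrite inE jn.
exists (fun t => delta_mx 0 (enum_val t) *m invmx L); split.
  move=> t; apply/kerP => j jS; rewrite mulmxKV // mxE eqxx /=.
  have := enum_valP t; rewrite inE; case: eqP => [<-|//].
  by rewrite jS.
move=> x /kerP x0; set z := x *m L.
exists [ffun t => z 0 (enum_val t)]; split.
  apply: (can_inj (f := fun y => y *m L) (g := fun y => y *m invmx L)).
    by move=> y; rewrite mulmxK.
  rewrite mulmx_suml; under eq_bigr do rewrite -scalemxAl mulmxKV //.
  apply/matrixP => i j; rewrite ord1 summxE -/z.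
  rewrite (eq_bigr (fun t => z 0 (enum_val t) * (enum_val t == j)%:R)); last first.
    by move=> t _; rewrite ffunE !mxE eqxx eq_sym.
  rewrite -(big_enum_val (A := mem (~: S)) (fun j' => z 0 j' * (j' == j)%:R)).
  rewrite big_mkcond /= (bigD1 j) //= big1 ?addr0.
    by rewrite eqxx mulr1 inE; case: ifP => // /negbFE /x0.
  by move=> j' /negPf ->; rewrite mulr0 if_same.
move=> a xa; apply/ffunP => t; rewrite ffunE /z xa mulmx_suml.
under eq_bigr do rewrite -scalemxAl mulmxKV //.
by rewrite coord_sum_delta_mx //; apply: enum_val_inj.
Qed.

Lemma card_diag_support m n (Q : pred nat) :
  #|[set j : 'I_m | (j < n)%N && Q j]| = count Q (iota 0 (minn m n)).
Proof.
rewrite cardE /enum_mem size_filter -enumT.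
transitivity (count (fun j => (j < n)%N && Q j) (iota 0 m)).
  by rewrite -val_enum_ord count_map; apply: eq_count => j; rewrite /= inE.
elim: m => [|m IHm]; first by rewrite min0n.
rewrite -addn1 iotaD count_cat IHm /= addn0 add0n.
have [mn|nm] := ltnP m n.
  by rewrite addn1 (minn_idPl mn) -addn1 iotaD count_cat /= addn0.
by rewrite /= addn0 addn1 (minn_idPr (leq_trans nm (leqnSn m))).
Qed.

Lemma int_mx_kernel_bases m n (M : 'M[int]_(m, n)) :
  exists k, [/\ (k <= m)%N, (k <= n)%N,
    exists b : 'I_(m - k) -> 'rV[int]_m, row_zbasis (fun x => x *m M = 0) b &
    exists b : 'I_(n - k) -> 'rV[int]_n, row_zbasis (fun y => y *m M^T = 0) b].
Proof.
have [L uL [R uR [s _ ->]]] := int_Smith_normal_form M.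
set S1 := [set j : 'I_m | (j < n)%N && (s`_j != 0)].
set S2 := [set j : 'I_n | (j < m)%N && (s`_j != 0)].
have S12 : #|S1| = #|S2|.
  by rewrite /S1 /S2 !(card_diag_support _ _ (fun j => s`_j != 0)) minnC.
have := cardsC S1; have := cardsC S2; rewrite !card_ord => cS2 cS1.
rewrite -[\matrix_(i, j) _]/(diag_mx_seq m n s).
exists #|S1|; split.
- by have := max_card (mem S1); rewrite card_ord.
- by have := max_card (mem S2); rewrite card_ord S12.
- by apply: equiv_diag_kernel_basis => //; rewrite -{1}cS1 addKn.
- rewrite !trmx_mul mulmxA diag_mx_seq_tr.
  by apply: equiv_diag_kernel_basis; rewrite ?unitmx_tr // S12 -{1}cS2 addKn.
Qed.

Definition vmul (I J : finType) (M : I -> J -> int) (c : chain I) : chain J :=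
  [ffun j => \sum_i c i * M i j].

Section VMul.
Variables (I J : finType) (M : I -> J -> int).

Lemma vmul_lincomb (K : finType) (a : {ffun K -> int}) (b : K -> chain I) :
  vmul M (lincomb a b) = lincomb a (fun k => vmul M (b k)).
Proof.
apply/ffunP => j; rewrite !ffunE; under eq_bigr do rewrite ffunE mulr_suml.
rewrite exchange_big; apply: eq_bigr => k _; rewrite ffunE mulr_sumr.
by apply: eq_bigr => i _; rewrite mulrA.
Qed.

Lemma vmulD (c c' : chain I) : vmul M (c + c') = vmul M c + vmul M c'.
Proof.
apply/ffunP => j; rewrite !ffunE -big_split; apply: eq_bigr => i _.
by rewrite !ffunE mulrDl.
Qed.

Lemma vmulN (c : chain I) : vmul M (- c) = - vmul M c.
Proof.
apply/ffunP => j; rewrite !ffunE -sumrN; apply: eq_bigr => i _.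
by rewrite !ffunE mulNr.
Qed.

Lemma vmul0 : vmul M 0 = 0.
Proof. by apply/ffunP => j; rewrite !ffunE big1 // => i _; rewrite ffunE mul0r. Qed.

Lemma vmul_adjoint (x : chain I) (y : chain J) :
  \sum_j vmul M x j * y j = \sum_i x i * vmul (fun j i => M i j) y i.
Proof.
rewrite (eq_bigr (fun j => \sum_i x i * M i j * y j)) => [|j _]; last first.
  by rewrite ffunE mulr_suml.
rewrite exchange_big; apply: eq_bigr => i _; rewrite ffunE mulr_sumr.
by apply: eq_bigr => j _; rewrite mulrAC -mulrA.
Qed.

End VMul.

Definition chain_of_row (I : finType) (x : 'rV[int]_#|I|) : chain I :=
  [ffun e => x 0 (enum_rank e)].

Definition mx_of_fun (I J : finType) (M : I -> J -> int) : 'M[int]_(#|I|, #|J|) :=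
  \matrix_(i, j) M (enum_val i) (enum_val j).

Lemma chain_of_row_inj (I : finType) : injective (@chain_of_row I).
Proof.
move=> x y /ffunP xy; apply/matrixP => i j; rewrite ord1 -(enum_valK j).
by have := xy (enum_val j); rewrite !ffunE.
Qed.

Lemma chain_of_row_sum (I : finType) p (a : {ffun 'I_p -> int}) (b : 'I_p -> 'rV_#|I|) :
  chain_of_row (\sum_t a t *: b t) = lincomb a (fun t => chain_of_row (b t)).
Proof.
apply/ffunP => e; rewrite !ffunE summxE; apply: eq_bigr => t _.
by rewrite !ffunE mxE.
Qed.

Lemma vmul_chain_of_row (I J : finType) (M : I -> J -> int) (x : 'rV_#|I|) :
  vmul M (chain_of_row x) = chain_of_row (x *m mx_of_fun M).
Proof.
apply/ffunP => j; rewrite !ffunE mxE.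
rewrite (reindex (@enum_val I (mem predT))) /=; last exact: onW_bij (enum_val_bij _).
by apply: eq_big => [i|i _]; rewrite ?ffunE ?mxE ?enum_valK ?enum_rankK.
Qed.

Lemma mx_of_fun_tr (I J : finType) (M : I -> J -> int) :
  mx_of_fun (fun j i => M i j) = (mx_of_fun M)^T.
Proof. by apply/matrixP => j i; rewrite !mxE. Qed.

Lemma zbasis_of_row_zbasis (I : finType) p (P : chain I -> Prop)
    (Q : 'rV[int]_#|I| -> Prop) (b : 'I_p -> 'rV_#|I|) :
  (forall x, P (chain_of_row x) <-> Q x) -> row_zbasis Q b ->
  is_Zbasis_on predT P (fun t => chain_of_row (b t)).
Proof.
move=> PQ [Qb hb]; split=> [t _ | f Pf]; first exact/PQ.
pose x : 'rV_#|I| := \row_i f (enum_val i).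
have fx : f = chain_of_row x by apply/ffunP => e; rewrite ffunE mxE enum_rankK.
have /PQ/hb [a [xa a_uniq]] : P (chain_of_row x) by rewrite -fx.
exists a; split=> [|a' [_ fa']]; first by split=> //; rewrite fx xa chain_of_row_sum.
by apply: a_uniq; apply: chain_of_row_inj; rewrite chain_of_row_sum -fx.
Qed.

Lemma kernel_bases (I J : finType) (M : I -> J -> int) :
  exists k, [/\ (k <= #|I|)%N, (k <= #|J|)%N,
    exists b : 'I_(#|I| - k) -> chain I,
      is_Zbasis_on predT (fun f => vmul M f = 0) b &
    exists b : 'I_(#|J| - k) -> chain J,
      is_Zbasis_on predT (fun y => vmul (fun j i => M i j) y = 0) b].
Proof.
have [k [kI kJ [b hb] [b' hb']]] := int_mx_kernel_bases (mx_of_fun M).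
have chain_of_row0 (K : finType) : chain_of_row (0 : 'rV_#|K|) = 0.
  by apply/ffunP => e; rewrite !ffunE mxE.
exists k; split=> //.
  exists (fun t => chain_of_row (b t)); apply: zbasis_of_row_zbasis hb => x.
  by rewrite vmul_chain_of_row -(chain_of_row0 J); split=> [/chain_of_row_inj | ->].
exists (fun t => chain_of_row (b' t)); apply: zbasis_of_row_zbasis hb' => y.
rewrite vmul_chain_of_row mx_of_fun_tr -(chain_of_row0 I).
by split=> [/chain_of_row_inj | ->].
Qed.

(** * Cycles of a periodic graph *)

Section PeriodicGraph.
Variables (V E : finType) (src tgt : E -> V) (d : nat) (tau : E -> 'rV[int]_d).

Definition incidence_index (e : E) (s : V + 'I_d) : int :=
  match s with
  | inl v => (v == tgt e)%:R - (v == src e)%:R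
  | inr j => tau e 0 j
  end.

Lemma vmul_incidence_inl c v :
  vmul incidence_index c (inl v) = boundary src tgt c v.
Proof.
rewrite ffunE /boundary; under eq_bigr do rewrite mulrBr.
rewrite sumrB !(big_mkcond (fun e => _ == v)) /=.
by congr (_ - _); apply: eq_bigr => e _; rewrite eq_sym; case: eqP; rewrite ?mulr1 ?mulr0.
Qed.

Lemma vmul_incidence_inr c j :
  vmul incidence_index c (inr j) = chain_index tau c 0 j.
Proof. by rewrite ffunE summxE; apply: eq_bigr => e _; rewrite mxE. Qed.

Lemma is_cycleE c :
  is_cycle src tgt c <-> forall v, vmul incidence_index c (inl v) = 0.
Proof. by split=> c0 v; rewrite ?vmul_incidence_inl // -vmul_incidence_inl. Qed.

Lemma is_cycle0E c : is_cycle0 src tgt tau c <-> vmul incidence_index c = 0.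
Proof.
rewrite /is_cycle0 is_cycleE; split=> [[c0 ind0] | c0].
  by apply/ffunP => -[v|j]; rewrite [RHS]ffunE ?c0 // vmul_incidence_inr ind0 mxE.
split=> [v|]; first by rewrite c0 ffunE.
by apply/matrixP => i j; rewrite ord1 -vmul_incidence_inr c0 !ffunE mxE.
Qed.

Definition displacement (x y : (V * 'rV[int]_d)%type) (s : V + 'I_d) : int :=
  match s with
  | inl v => (v == y.1)%:R - (v == x.1)%:R
  | inr j => y.2 0 j - x.2 0 j
  end.

Lemma walk_chain x y : clos_refl_sym_trans _ (periodic_adj src tgt tau) x y ->
  exists c, forall s, vmul incidence_index c s = displacement x y s.
Proof.
elim=> {x y} [x y [e [n [-> ->]]] | x | x y _ [c xy] | x y z _ [c xy] _ [c' yz]].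
- exists [ffun e' => (e' == e)%:R] => s; rewrite ffunE.
  under eq_bigr do rewrite ffunE.
  by rewrite sum_delta_l; case: s => [v|j] //=; rewrite mxE addrAC subrr add0r.
- by exists 0 => s; rewrite vmul0 ffunE; case: s => [v|j]; rewrite /= subrr.
- by exists (- c) => s; rewrite vmulN ffunE xy; case: s => [v|j]; rewrite /= opprB.
- exists (c + c') => s; rewrite vmulD ffunE xy yz.
  by case: s => [v|j]; rewrite /= addrC addrA subrK.
Qed.

Hypothesis conn : periodic_connected src tgt tau.

Lemma periodic_connected_const (f : V -> int) :
  (forall e, f (src e) = f (tgt e)) -> forall v w, f v = f w.
Proof.
move=> f_edge v w.
suff: forall x y, clos_refl_sym_trans _ (periodic_adj src tgt tau) x y -> f x.1 = f y.1.
  by move/(_ (v, 0) (w, 0) (conn _ _)).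
move=> x y; elim=> {x y} [x y [e [n [-> ->]]] | // | x y _ -> // | x y z _ -> _ -> //].
exact: f_edge.
Qed.

Hypothesis V_gt0 : (0 < #|V|)%N.

Lemma unit_index_cycle (j : 'I_d) :
  exists c, forall s, vmul incidence_index c s = (s == inr j)%:R.
Proof.
case/card_gt0P: V_gt0 => v0 _.
have [c walk] := walk_chain (conn (v0, 0) (v0, delta_mx 0 j)).
by exists c => s; rewrite walk; case: s => [v|j'] /=; rewrite ?subrr // !mxE subr0.
Qed.

Definition vertex_indicator : chain (V + 'I_d)%type :=
  [ffun s => if s is inl _ then 1 else 0].

Lemma vertex_indicator_neq0 : vertex_indicator != 0.
Proof.
case/card_gt0P: V_gt0 => v0 _.
by apply/eqP => /ffunP/(_ (inl v0)); rewrite !ffunE.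
Qed.

Lemma incidence_cokernel (y : chain (V + 'I_d)%type) :
  vmul (fun s e => incidence_index e s) y = 0 <->
  exists c : int, forall s, y s = c * vertex_indicator s.
Proof.
have edge_eq (z : chain (V + 'I_d)%type) e :
    vmul (fun s e => incidence_index e s) z e =
    z (inl (tgt e)) - z (inl (src e)) + \sum_j tau e 0 j * z (inr j).
  rewrite ffunE big_sumType /=; congr (_ + _); last by apply: eq_bigr => j; rewrite mulrC.
  under eq_bigr do rewrite mulrC mulrBl.
  by rewrite sumrB !sum_delta_l.
split=> [y0 | [c yc]]; last first.
  apply/ffunP => e; rewrite edge_eq !yc [RHS]ffunE !ffunE subrr add0r.
  by rewrite big1 // => j _; rewrite yc ffunE !mulr0.
have y_inr j : y (inr j) = 0.
  have [c cj] := unit_index_cycle j.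
  have := vmul_adjoint incidence_index c y; rewrite y0.
  rewrite (eq_bigr (fun s => (s == inr j)%:R * y s)) => [|s _]; last by rewrite cj.
  by rewrite sum_delta_l => ->; rewrite big1 // => e _; rewrite ffunE mulr0.
have y_edge e : y (inl (src e)) = y (inl (tgt e)).
  have /eqP := edge_eq y e; rewrite y0 ffunE big1 => [|j _]; last by rewrite y_inr mulr0.
  by rewrite addr0 eq_sym subr_eq0 => /eqP.
case/card_gt0P: V_gt0 => v0 _.
exists (y (inl v0)) => -[v|j]; rewrite ffunE ?mulr1 ?mulr0 ?y_inr //.
exact: (periodic_connected_const (f := fun v => y (inl v))).
Qed.

Lemma cycle0_basis :
  (d <= betti V E)%N /\
  exists b : 'I_(betti V E - d) -> chain E,
    is_Zbasis_on predT (is_cycle0 src tgt tau) b.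
Proof.
have [k [kE kVd [b b_basis] [b' b'_basis]]] := kernel_bases incidence_index.
have := zbasis_line_card vertex_indicator_neq0 (zbasis_ext incidence_cokernel b'_basis).
rewrite card_sum card_ord => rank1.
split; first by rewrite /betti; lia.
have -> : (betti V E - d = #|E| - k)%N by rewrite /betti; lia.
by exists b; apply: zbasis_ext b_basis => f; rewrite is_cycle0E.
Qed.

End PeriodicGraph.

Section CycleBasis.
Variables (V E : finType) (src tgt : E -> V) (d : nat) (tau : E -> 'rV[int]_d).
Variables (q : nat) (u : 'I_d -> chain E) (b0 : 'I_q -> chain E).
Hypothesis u_index :
  forall j s, vmul (incidence_index src tgt tau) (u j) s = (s == inr j)%:R.
Hypothesis b0_basis : is_Zbasis_on predT (is_cycle0 src tgt tau) b0.

Let M := incidence_index src tgt tau.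
Let c := ord_cat u b0.

Lemma vmul_cycle0_basis t : vmul M (b0 t) = 0.
Proof. exact/is_cycle0E/b0_basis.1. Qed.

Lemma vmul_lincomb_cat (a : {ffun 'I_(d + q) -> int}) s :
  vmul M (lincomb a c) s = if s is inr j then a (lshift q j) else 0.
Proof.
rewrite lincomb_ord_cat vmulD !vmul_lincomb !ffunE.
rewrite [X in _ + X]big1 => [|t _]; last by rewrite vmul_cycle0_basis !ffunE mulr0.
under eq_bigr do rewrite ffunE u_index.
case: s => [v|j]; first by rewrite addr0 big1 // => j _; rewrite mulr0.
rewrite addr0 (bigD1 j) //= eqxx mulr1 big1 ?addr0 // => j' /negPf j'j.
by rewrite (inj_eq (@inr_inj _ _)) eq_sym j'j mulr0.
Qed.

Lemma cat_cycle_basis : is_Zbasis_on predT (is_cycle src tgt) c.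
Proof.
apply: zbasis_intro.
- move=> i; apply/(is_cycleE _ _ tau) => v; rewrite /c /ord_cat.
  by case: split => [j|t]; rewrite ?u_index // vmul_cycle0_basis ffunE.
- move=> f /(is_cycleE _ _ tau) f_cycle.
  pose w := [ffun j => vmul M f (inr j)].
  have f_index : vmul M f = lincomb w (fun j => vmul M (u j)).
    apply/ffunP => s; rewrite [RHS]ffunE.
    rewrite (eq_bigr (fun j => (s == inr j)%:R * w j)) => [|j _]; last first.
      by rewrite u_index mulrC.
    case: s => [v|j]; first by rewrite f_cycle big1 // => j _; rewrite mul0r.
    rewrite (eq_bigr (fun j' => (j' == j)%:R * w j')) => [|j' _]; last first.
      by rewrite (inj_eq (@inr_inj _ _)) eq_sym.
    by rewrite sum_delta_l /w ffunE.
  have /(zbasis_span b0_basis) [a' fa'] : is_cycle0 src tgt tau (f - lincomb w u).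
    by apply/is_cycle0E; rewrite vmulD vmulN vmul_lincomb f_index subrr.
  exists [ffun i => ord_cat w a' i]; rewrite lincomb_ord_cat.
  have -> : [ffun j => [ffun i => ord_cat w a' i] (lshift q j)] = w.
    by apply/ffunP => j; rewrite !ffunE ord_cat_lshift /w !ffunE.
  have -> : [ffun k => [ffun i => ord_cat w a' i] (rshift d k)] = a'.
    by apply/ffunP => k; rewrite !ffunE ord_cat_rshift.
  by rewrite -fa' addrC subrK.
- move=> a ac0.
  have a_lshift j : a (lshift q j) = 0.
    by rewrite -(vmul_lincomb_cat a (inr j)) ac0 vmul0 ffunE.
  have aL0 : [ffun j => a (lshift q j)] = 0 by apply/ffunP => j; rewrite !ffunE a_lshift.
  have cycle0_0 : is_cycle0 src tgt tau 0 by apply/is_cycle0E; exact: vmul0.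
  have /(zbasis_free b0_basis cycle0_0)/ffunP aR0 :
      lincomb [ffun k => a (rshift d k)] b0 = 0.
    by move: ac0; rewrite lincomb_ord_cat aL0 lincomb0 add0r.
  apply/ffunP => i; rewrite -(splitK i) ffunE; case: (split i) => [j|k] /=.
    exact: a_lshift.
  by have := aR0 k; rewrite !ffunE.
Qed.

Lemma cat_index (i : 'I_(d + q)) (hi : (i < d)%N) :
  chain_index tau (c i) = delta_mx 0 (Ordinal hi).
Proof.
have -> : c i = u (Ordinal hi).
  rewrite /c /ord_cat; case: splitP => [j ij | k ik]; first by congr u; apply: val_inj.
  by exfalso; move: hi; rewrite ik ltnNge leq_addr.
apply/matrixP => i' j; rewrite ord1 -(vmul_incidence_inr src tgt) u_index !mxE eqxx /=.
by rewrite (inj_eq (@inr_inj _ _)).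
Qed.

Lemma cat_cycle0_basis :
  is_Zbasis_on (fun i : 'I_(d + q) => (d <= i)%N) (is_cycle0 src tgt tau) c.
Proof.
apply: zbasis_sub cat_cycle_basis _ _ _ => [f [] // | i di | a /is_cycle0E a0 i].
  rewrite /c /ord_cat; case: splitP => [j ij | k _]; last exact: b0_basis.1.
  by move: (ltn_ord j); rewrite -ij ltnNge di.
rewrite -ltnNge => id; have -> : i = lshift q (Ordinal id) by apply: val_inj.
by rewrite -(vmul_lincomb_cat a (inr (Ordinal id))) a0 ffunE.
Qed.

End CycleBasis.

(** * The modified fundamental graph *)

Section ModifiedGraph.
Variables (V E I : finType) (src tgt : E -> V) (c : I -> chain E).

Let edge_part (F : chain (E + V)%type) : chain E := [ffun e => F (inl e)].

Lemma is_cycle_modified F :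
  is_cycle (msrc src) (msrc tgt) F <-> is_cycle src tgt (edge_part F).
Proof.
have bF v : boundary (msrc src) (msrc tgt) F v = boundary src tgt (edge_part F) v.
  rewrite /boundary !big_sumType /=.
  under [in RHS]eq_bigr do rewrite ffunE.
  under [in X in _ = _ - X]eq_bigr do rewrite ffunE.
  by rewrite opprD addrACA subrr addr0.
by split=> F0 v; rewrite ?bF // -bF.
Qed.

Let loop_basis (s : I + V) : chain (E + V)%type :=
  match s with inl i => ext_chain V (c i) | inr x => loop_chain E x end.

Lemma lincomb_loop_basis (A : {ffun I + V -> int}) :
  lincomb A loop_basis =
  [ffun s => match s with
             | inl e => lincomb [ffun i => A (inl i)] c e
             | inr x => A (inr x)
             end].
Proof.
apply/ffunP => s; rewrite !ffunE big_sumType /=.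
case: s => [e|x].
  rewrite [X in _ + X]big1 => [|y _]; last by rewrite ffunE mulr0.
  by rewrite addr0 ffunE; apply: eq_bigr => i _; rewrite !ffunE.
rewrite big1 => [|i _]; last by rewrite ffunE mulr0.
rewrite add0r (eq_bigr (fun y => (y == x)%:R * A (inr y))) ?sum_delta_l //.
by move=> y _; rewrite ffunE -natz mulrC eq_sym.
Qed.

Lemma modified_cycle_basis :
  is_Zbasis_on predT (is_cycle src tgt) c ->
  is_Zbasis_on predT (is_cycle (msrc src) (msrc tgt)) loop_basis.
Proof.
move=> c_basis.
have cycle0 : is_cycle src tgt 0.
  by move=> v; rewrite /boundary !big1 ?subrr // => e _; rewrite ffunE.
apply: zbasis_intro.
- case=> [i|x]; apply/is_cycle_modified.
    have -> : edge_part (ext_chain V (c i)) = c i by apply/ffunP => e; rewrite !ffunE.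
    exact: c_basis.1.
  have -> : edge_part (loop_chain E x) = 0 by apply/ffunP => e; rewrite !ffunE.
  exact: cycle0.
- move=> F /is_cycle_modified /(zbasis_span c_basis) [a Fa].
  pose A : {ffun I + V -> int} :=
    [ffun s => match s with inl i => a i | inr x => F (inr x) end].
  exists A; rewrite lincomb_loop_basis.
  have -> : [ffun i => A (inl i)] = a by apply/ffunP => i; rewrite !ffunE.
  apply/ffunP => -[e|x]; rewrite [RHS]ffunE; last by rewrite /A ffunE.
  by rewrite -Fa /edge_part ffunE.
- move=> A /ffunP A0.
  have /(zbasis_free c_basis cycle0)/ffunP Ainl : lincomb [ffun i => A (inl i)] c = 0.
    by apply/ffunP => e; have := A0 (inl e); rewrite lincomb_loop_basis !ffunE.
  apply/ffunP => -[i|x]; first by have := Ainl i; rewrite !ffunE.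
  by have := A0 (inr x); rewrite lincomb_loop_basis !ffunE.
Qed.

End ModifiedGraph.

Theorem lemma3p6 (V E : finType) (src tgt : E -> V) (d : nat)
  (tau : E -> 'rV[int]_d)
  (hd : (0 < d)%N) (hV : (0 < #|V|)%N)
  (hconn : periodic_connected src tgt tau) :
  exists c : 'I_(betti V E) -> chain E,
    [/\ is_Zbasis_on predT (is_cycle src tgt) c,
        (forall i : 'I_(betti V E), forall hi : (i < d)%N,
           chain_index tau (c i) = delta_mx 0 (Ordinal hi)),
        is_Zbasis_on (fun i : 'I_(betti V E) => (d <= i)%N)
          (is_cycle0 src tgt tau) c
      & is_Zbasis_on predT (is_cycle (msrc src) (msrc tgt))
          (fun a : 'I_(betti V E) + V =>
             match a with
             | inl i => ext_chain V (c i)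
             | inr x => loop_chain E x
             end)].
Proof.
have [d_le_betti [b0 b0_basis]] := cycle0_basis hconn hV.
have /fin_all_exists [u u_index] := unit_index_cycle hconn hV.
have -> : betti V E = (d + (betti V E - d))%N by rewrite subnKC.
have c_basis := cat_cycle_basis u_index b0_basis.
exists (ord_cat u b0); split.
- exact: c_basis.
- exact: cat_index u_index.
- exact: cat_cycle0_basis u_index b0_basis.
- exact: modified_cycle_basis c_basis.
Qed.
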